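(* Assume $n\ge 3t+1$. In any execution of COOL, if $\eta^{[1]}=2$ then $\eta^{[3]}\le 1$.
   Context: Setting. $n$ processors indexed by $[1:n]$, pairwise joined by reliable private synchronous channels; recipients know senders. At most $t$ processors are dishonest, controlled by an adversary who may make them deviate arbitrarily (missing values replaced by a fixed default); the others are honest. Processor $i$ holds an $\ell$-bit initial message $\boldsymbol w_i$. $\phi$ is a default value different from every $\ell$-bit message. Logarithms are base 2. Code. $k=\lfloor t/5\rfloor+1$, $c=\lceil \max\{\ell,(t/5+1)\log(n+1)\}/k\rceil$. Messages are zero-padded to $kc$ bits and viewed in $GF(2^c)^k$. Integers in $[1:n]$ are identified with distinct nonzero elements of $GF(2^c)$; $\boldsymbol h_i\in GF(2^c)^k$ has entries $h_{i,j}=\prod_{p\in[1:k],\,p\ne j}\frac{i-p}{j-p}$ (field arithmetic). COOL, Phases 1–3 (honest processor $i$). Initialization: updated message $\boldsymbol w^{(i)}:=\boldsymbol w_i$, $y^{(i)}_j:=\boldsymbol h_j^{\mathsf T}\boldsymbol w_i$, $u_i(i):=1$. Phase 1. (a) Send $(y^{(i)}_j,y^{(i)}_i)$ to each $j\ne i$. (b) For $j\ne i$, link indicator $u_i(j):=1$ if the pair received from $j$ equals $(y^{(i)}_i,y^{(i)}_j)$, else $0$. Success indicator $s_i:=1$ if $\sum_{j=1}^n u_i(j)\ge n-t$; otherwise $s_i:=0$ and $\boldsymbol w^{(i)}:=\phi$. (c) Send $s_i$ to all; each processor records the indicator received from each $j$ (own for itself) and forms $\mathcal S_1=\{j:s_j=1\}$,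 $\mathcal S_0=\{j:s_j=0\}$ (views may differ between processors). Phase 2. If $s_i=1$: set $u_i(j):=0$ for all $j\in\mathcal S_0$; if now $\sum_j u_i(j)<n-t$, set $s_i:=0$, $\boldsymbol w^{(i)}:=\phi$ and send $s_i=0$ to all. Everyone overwrites recorded indicators with newly received ones and recomputes $\mathcal S_0,\mathcal S_1$. Phase 3 begins by repeating the steps of Phase 2 once more (followed by a vote and binary agreement, irrelevant here). Notation. For $p\in\{1,2,3\}$, $s^{[p]}_i$ is the value of honest processor $i$'s success indicator at the end of (the indicator-updating steps of) Phase $p$, and $\eta^{[p]}$ is the number of distinct values in $\{\boldsymbol w_i: i\text{ honest},\ s^{[p]}_i=1\}$ (initial messages). *)

From HB Require Import structures.
From mathcomp Require Import all_boot all_order all_algebra all_field.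
Unset Printing Implicit Defensive.
Import GRing.Theory.
Local Open Scope ring_scope.

(* Processors [1:n] are represented by 'I_n (processor i : 'I_n is the
   integer i+1).  Code dimension k = floor(t/5)+1. *)
Definition cool_k (t : nat) : nat := (t %/ 5 + 1)%N.

(* c = ceil(max{l, (t/5+1) log2(n+1)} / k), i.e. the least c with
   c*k >= l and c*k >= (t/5+1) log2(n+1); the latter is equivalent to
   (n+1)^(t+5) <= 2^(5ck). *)
Definition is_cool_c (n t l c : nat) : Prop :=
  [/\ (l <= c * cool_k t)%N,
      ((n.+1) ^ (t + 5) <= 2 ^ (5 * (c * cool_k t)))%N
    & forall c', (l <= c' * cool_k t)%N ->
        ((n.+1) ^ (t + 5) <= 2 ^ (5 * (c' * cool_k t)))%N -> (c <= c')%N].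

Section COOL.
Variables (n t l c : nat) (F : finFieldType).
(* alpha m : the field element identified with the integer m in [1:n] *)
Variable alpha : nat -> F.
(* beta : the field element of GF(2^c) represented by a c-bit string *)
Variable beta : c.-tuple bool -> F.

Local Notation k := (cool_k t).

Definition hcoef (i : nat) (j : 'I_k) : F :=
  \prod_(p < k | p != j) ((alpha i - alpha p.+1) / (alpha j.+1 - alpha p.+1)).

(* zero-padding to kc bits, split into k blocks of c bits *)
Definition encode (w : l.-tuple bool) (j : 'I_k) : F :=
  beta [tuple nth false w (j * c + q) | q < c].

Definition ycode (w : l.-tuple bool) (j : 'I_n) : F :=
  \sum_(p < k) hcoef j.+1 p * encode w p.

(* An execution: honest set H, initial messages w, and the adversary's
   choices of what each dishonest processor j sends to each processor i. *)
Variables (H : {set 'I_n}) (w : 'I_n -> l.-tuple bool).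
Variable adv1 : 'I_n -> 'I_n -> F * F.     (* Phase 1(a): pair j sends to i *)
Variable advs1 : 'I_n -> 'I_n -> bool.     (* Phase 1(c): indicator j sends to i *)
Variable adv2 : 'I_n -> 'I_n -> option bool. (* Phase 2: None = nothing sent *)

Definition recv1 (i j : 'I_n) : F * F :=
  if j \in H then (ycode (w j) i, ycode (w j) j) else adv1 j i.

Definition u1 (i j : 'I_n) : bool :=
  (j == i) || (recv1 i j == (ycode (w i) i, ycode (w i) j)).

Definition s1 (i : 'I_n) : bool := (n - t <= #|[set j | u1 i j]|)%N.

Definition view1 (i j : 'I_n) : bool :=
  if j == i then s1 i else if j \in H then s1 j else advs1 j i.

Definition u2 (i j : 'I_n) : bool := u1 i j && (~~ s1 i || view1 i j).
Definition s2 (i : 'I_n) : bool := s1 i && (n - t <= #|[set j | u2 i j]|)%N.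

Definition msg2 (j i : 'I_n) : option bool :=
  if j \in H then (if s1 j && ~~ s2 j then Some false else None) else adv2 j i.

Definition view2 (i j : 'I_n) : bool :=
  if j == i then s2 i else if msg2 j i is Some b then b else view1 i j.

Definition u3 (i j : 'I_n) : bool := u2 i j && (~~ s2 i || view2 i j).
Definition s3 (i : 'I_n) : bool := s2 i && (n - t <= #|[set j | u3 i j]|)%N.

Definition cool_eta (s : 'I_n -> bool) : nat := #|[set w i | i in H & s i]|.

End COOL.

(* Codewords of two distinct messages agree on fewer than k <= t+1
   coordinates: their difference is the evaluation of a nonzero polynomial of
   degree < k, the Lagrange interpolant of the difference of the encodings.
   Two honest processors with different messages that keep their mutual link
   agree on both of their own coordinates.  Suppose honest processors with
   messages a <> b both survive Phase 3; as eta^[1] = 2, a and b are the only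
   messages of honest Phase-1 survivors.  If every honest Phase-2 survivor
   holding a lies in the agreement set Z of a and b, the Phase-3 survivor
   holding a has at least n - 2t linked honest Phase-2 survivors, all in Z,
   so n - 2t < k.  Otherwise an honest Phase-2 survivor holding a outside Z is
   linked to honest Phase-1 survivors holding a only, so at least n - 2t
   honest processors hold a.  Arguing likewise for b, every combination
   contradicts n >= 3t+1, the last one because 2(n - 2t) honest processors
   would be needed. *)

From HB Require Import structures.
From mathcomp Require Import all_boot all_order all_algebra all_field.
From mathcomp Require Import zify.
Import GRing.Theory.
Local Open Scope ring_scope.

Section LagrangeInterpolation.
Context {F : fieldType} {k : nat} (x : 'I_k -> F).

Definition lagrange_basis (p : 'I_k) : {poly F} :=
  \prod_(q < k | q != p) ((x p - x q)^-1 *: ('X - (x q)%:P)).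

Definition lagrange_interp (v : 'I_k -> F) : {poly F} :=
  \sum_(p < k) v p *: lagrange_basis p.

Lemma horner_lagrange_basis p z :
  (lagrange_basis p).[z] = \prod_(q < k | q != p) ((z - x q) / (x p - x q)).
Proof.
rewrite horner_prod; apply: eq_bigr => q _.
by rewrite hornerZ hornerXsubC mulrC.
Qed.

Lemma size_lagrange_basis p : (size (lagrange_basis p) <= k)%N.
Proof.
apply: leq_trans (size_poly_prod_leq _ _) _.
set s := (\sum_(q | q != p) _)%N.
have : (s <= \sum_(q | q != p) 2)%N.
  apply: leq_sum => q _.
  by apply: leq_trans (size_scale_leq _ _) _; rewrite size_XsubC.
rewrite sum_nat_const cardC1 card_ord; have := ltn_ord p; lia.
Qed.

Lemma horner_lagrange_interp v z :
  (lagrange_interp v).[z] = \sum_(p < k) v p * (lagrange_basis p).[z].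
Proof. by rewrite horner_sum; apply: eq_bigr => p _; rewrite hornerZ. Qed.

Lemma lagrange_interpB v v' :
  lagrange_interp (fun p => v p - v' p) =
  lagrange_interp v - lagrange_interp v'.
Proof. by rewrite -sumrB; apply: eq_bigr => p _; rewrite scalerBl. Qed.

Lemma size_lagrange_interp v : (size (lagrange_interp v) <= k)%N.
Proof.
apply: leq_trans (size_sum _ _ _) _; apply/bigmax_leqP => p _.
exact: leq_trans (size_scale_leq _ _) (size_lagrange_basis p).
Qed.

Hypothesis x_inj : injective x.

Lemma lagrange_basis_node p q : (lagrange_basis p).[x q] = (p == q)%:R.
Proof.
rewrite horner_lagrange_basis; have [<- | pq] := eqVneq p q.
  apply: big1 => r rp; rewrite divff // subr_eq0.
  by apply: contra rp => /eqP/x_inj ->.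
by rewrite (bigD1 q) 1?eq_sym //= subrr !mul0r.
Qed.

Lemma lagrange_interp_node v q : (lagrange_interp v).[x q] = v q.
Proof.
rewrite horner_lagrange_interp (bigD1 q) //= lagrange_basis_node eqxx mulr1.
rewrite big1 ?addr0 // => p pq.
by rewrite lagrange_basis_node (negPf pq) mulr0.
Qed.

Lemma card_roots_lagrange_interp_lt (I : finType) (e : I -> F) v q :
  injective e -> v q != 0 ->
  (#|[set m | root (lagrange_interp v) (e m)]| < k)%N.
Proof.
move=> e_inj vq_neq0.
have interp_neq0 : lagrange_interp v != 0.
  apply: contraNneq vq_neq0 => interp0.
  by rewrite -lagrange_interp_node interp0 horner0.
rewrite cardE -(size_map e).
apply: leq_trans (max_poly_roots interp_neq0 _ _) (size_lagrange_interp v).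
  by apply/allP => z /mapP[m]; rewrite mem_enum inE => root_m ->.
by rewrite (map_inj_uniq e_inj) enum_uniq.
Qed.

End LagrangeInterpolation.

Section ReedSolomonDistance.
Context {n t l c : nat} {F : finFieldType}.
Context {alpha : nat -> F} {beta : c.-tuple bool -> F}.
Hypothesis l_le_ck : (l <= c * cool_k t)%N.
Hypothesis beta_inj : injective beta.
Hypothesis alpha_inj : {in [pred m | (0 < m <= n)%N] &, injective alpha}.
Hypothesis k_le_n : (cool_k t <= n)%N.

Local Notation nodes := (fun p : 'I_(cool_k t) => alpha p.+1).

Lemma encode_inj a b : encode t l c F beta a =1 encode t l c F beta b -> a = b.
Proof.
move=> eq_ab; apply: eq_from_tnth => r.
have c_gt0 : (0 < c)%N.
  by move: (ltn_ord r) l_le_ck; case: c => //=; rewrite mul0n; lia.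
have r_blk : (r %/ c < cool_k t)%N.
  by rewrite ltn_divLR // mulnC; exact: leq_trans (ltn_ord r) l_le_ck.
have /beta_inj := eq_ab (Ordinal r_blk).
move=> /(congr1 (fun s : c.-tuple bool => tnth s (Ordinal (ltn_pmod r c_gt0)))).
by rewrite !tnth_mktuple /= -divn_eq !(tnth_nth false).
Qed.

Lemma nodes_inj : injective nodes.
Proof.
move=> p q /alpha_inj; rewrite !inE => eq_pq; apply/val_inj/succn_inj/eq_pq.
  by have := ltn_ord p; lia.
by have := ltn_ord q; lia.
Qed.

Lemma ycode_lagrange a (m : 'I_n) :
  ycode n t l c F alpha beta a m =
  (lagrange_interp nodes (encode t l c F beta a)).[alpha m.+1].
Proof.
rewrite horner_lagrange_interp; apply: eq_bigr => p _.
by rewrite horner_lagrange_basis mulrC.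
Qed.

Lemma card_ycode_agree_lt a b : a != b ->
  (#|[set m | ycode n t l c F alpha beta a m == ycode n t l c F alpha beta b m]|
    < cool_k t)%N.
Proof.
move=> a_neq_b.
have [q enc_q] : exists q, encode t l c F beta a q != encode t l c F beta b q.
  apply/existsP; apply: contraNT a_neq_b => /existsPn enc_eq.
  by apply/eqP/encode_inj => q; apply/eqP/negPn/enc_eq.
have alpha_succ_inj : injective (fun m : 'I_n => alpha m.+1).
  move=> m m' /alpha_inj; rewrite !inE => eq_mm'.
  by apply/val_inj/succn_inj/eq_mm'; exact: ltn_ord.
pose v p := encode t l c F beta a p - encode t l c F beta b p.
have v_q : v q != 0 by rewrite subr_eq0.
apply: leq_ltn_trans
  (card_roots_lagrange_interp_lt _ nodes_inj _ _ v q alpha_succ_inj v_q).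
apply: subset_leq_card; apply/subsetP => m; rewrite !inE.
by rewrite lagrange_interpB /root hornerD hornerN -!ycode_lagrange subr_eq0.
Qed.

End ReedSolomonDistance.

Lemma card_fibers2_le {T : finType} {U : eqType} (A : {set T}) (f : T -> U)
    {a b : U} : a != b ->
  (#|[set x in A | f x == a]| + #|[set x in A | f x == b]| <= #|A|)%N.
Proof.
move=> a_neq_b.
have disj : [disjoint [set x in A | f x == a] & [set x in A | f x == b]].
  apply/pred0P => x; rewrite /= !inE.
  by case: eqP => [-> | _]; rewrite ?(negPf a_neq_b) !andbF.
rewrite -cardsUI (disjoint_setI0 disj) cards0 addn0.
by apply: subset_leq_card; apply/subsetP => x; rewrite !inE => /orP[] /andP[].
Qed.

Section Execution.
Context {n t l c : nat} {F : finFieldType}.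
Context {alpha : nat -> F} {beta : c.-tuple bool -> F}.
Context {H : {set 'I_n}} {w : 'I_n -> l.-tuple bool}.
Context {adv1 : 'I_n -> 'I_n -> F * F} {advs1 : 'I_n -> 'I_n -> bool}.
Context {adv2 : 'I_n -> 'I_n -> option bool}.

Local Notation y := (ycode n t l c F alpha beta).
Local Notation U1 := (u1 n t l c F alpha beta H w adv1).
Local Notation S1 := (s1 n t l c F alpha beta H w adv1).
Local Notation S2 := (s2 n t l c F alpha beta H w adv1 advs1).
Local Notation S3 := (s3 n t l c F alpha beta H w adv1 advs1 adv2).

Lemma s2_s1 {i} : S2 i -> S1 i. Proof. by case/andP. Qed.

Lemma s3_s2 {i} : S3 i -> S2 i. Proof. by case/andP. Qed.

Lemma honest_link_ycode {i j} : i \in H -> j \in H -> U1 i j ->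
  y (w j) i = y (w i) i /\ y (w j) j = y (w i) j.
Proof.
rewrite /u1 /recv1 => _ ->; case/orP => [/eqP -> // | ].
by rewrite xpair_eqE => /andP[/eqP -> /eqP ->].
Qed.

Lemma s2_honest_links {i} : S2 i ->
  (n - t <= #|~: H| + #|[set j in H | U1 i j && S1 j]|)%N.
Proof.
case/andP => s1i /leq_trans; apply; apply: leq_trans (leq_card_setU _ _).
apply: subset_leq_card; apply/subsetP => j; rewrite !inE /u2 s1i /view1.
by case: (j \in H) => //=; case: eqP => [-> | _]; rewrite ?s1i ?andbT.
Qed.

Lemma s3_honest_links {i} : S3 i ->
  (n - t <= #|~: H| + #|[set j in H | U1 i j && S2 j]|)%N.
Proof.
case/andP => s2i /leq_trans; apply; apply: leq_trans (leq_card_setU _ _).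
apply: subset_leq_card; apply/subsetP => j; rewrite !inE /u3 s2i /view2.
case: eqP => [-> | /eqP j_neq_i].
  by rewrite s2i => /andP[/andP[->]] _; case: (i \in H).
case jH: (j \in H) => //=; rewrite /msg2 jH /u2 /view1 (negPf j_neq_i) jH.
by case: (S1 j) (S2 j) => [] [] // /andP[/andP[-> _]].
Qed.

Lemma cool_eta2_message {s : 'I_n -> bool} {i j m} :
  cool_eta n l H w s = 2%N -> i \in H -> j \in H -> m \in H ->
  s i -> s j -> s m -> w i != w j -> w m = w i \/ w m = w j.
Proof.
move=> eta2 iH jH mH si sj sm wij.
have [-> | wmi] := eqVneq (w m) (w i); first by left.
have [-> | wmj] := eqVneq (w m) (w j); first by right.
suff : (2 < cool_eta n l H w s)%N by rewrite eta2.
apply/card_gt2P; exists (w i), (w j), (w m).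
split; last by split; rewrite // eq_sym.
by split; apply: imset_f; rewrite inE; apply/andP.
Qed.

Section TwoMessages.
Context {a b : l.-tuple bool}.
Hypothesis s1_two_messages : forall m, m \in H -> S1 m -> w m = a \/ w m = b.

Lemma s2_disagree_bound {m} : m \in H -> S2 m -> w m = a -> y a m != y b m ->
  (n - t <= #|~: H| + #|[set j in H | w j == a]|)%N.
Proof.
move=> mH s2m wm disagree; apply: leq_trans (s2_honest_links s2m) _.
rewrite leq_add2l; apply: subset_leq_card; apply/subsetP => j.
rewrite !inE => /andP[jH /andP[link s1j]]; rewrite jH /=.
have [-> | wj] := s1_two_messages j jH s1j; first exact: eqxx.
have [+ _] := honest_link_ycode mH jH link.
by rewrite wm wj => agree; rewrite agree eqxx in disagree.
Qed.

Lemma s3_agree_bound {i} : i \in H -> S3 i -> w i = a ->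
  (forall m, m \in H -> S2 m -> w m = a -> y a m = y b m) ->
  (n - t <= #|~: H| + #|[set m | y a m == y b m]|)%N.
Proof.
move=> iH s3i wi s2_agree; apply: leq_trans (s3_honest_links s3i) _.
rewrite leq_add2l; apply: subset_leq_card; apply/subsetP => j.
rewrite !inE => /andP[jH /andP[link s2j]].
have [wj | wj] := s1_two_messages j jH (s2_s1 s2j); first by rewrite s2_agree.
have [_] := honest_link_ycode iH jH link.
by rewrite wi wj => ->.
Qed.

Lemma s3_honest_bound {i} : i \in H -> S3 i -> w i = a ->
  (n - t <= #|~: H| + #|[set m | y a m == y b m]|)%N \/
  (n - t <= #|~: H| + #|[set j in H | w j == a]|)%N.
Proof.
move=> iH s3i wi.
have [m /= /and4P[mH s2m /eqP wm disagree] | all_agree] :=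
  pickP [pred m | [&& m \in H, S2 m, w m == a & y a m != y b m]].
  by right; exact: (s2_disagree_bound mH s2m wm disagree).
left; apply: s3_agree_bound iH s3i wi _ => m mH s2m wm.
by apply/eqP; have := all_agree m; rewrite /= mH s2m wm eqxx /= => /negbFE.
Qed.

End TwoMessages.

End Execution.

Theorem lemma10 (n t l c : nat) (F : finFieldType)
  (alpha : nat -> F) (beta : c.-tuple bool -> F)
  (H : {set 'I_n}) (w : 'I_n -> l.-tuple bool)
  (adv1 : 'I_n -> 'I_n -> F * F) (advs1 : 'I_n -> 'I_n -> bool)
  (adv2 : 'I_n -> 'I_n -> option bool) :
  (3 * t + 1 <= n)%N ->
  is_cool_c n t l c ->
  #|F| = (2 ^ c)%N ->
  {in [pred m | (0 < m <= n)%N] &, injective alpha} ->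
  (forall m, (0 < m <= n)%N -> alpha m != 0%R) ->
  bijective beta ->
  (#|~: H| <= t)%N ->
  cool_eta n l H w (s1 n t l c F alpha beta H w adv1) = 2%N ->
  (cool_eta n l H w (s3 n t l c F alpha beta H w adv1 advs1 adv2) <= 1)%N.
Proof.
move=> n_ge [l_le_ck _ _] _ alpha_inj _ [beta' betaK _] dishonest_le eta1.
have k_le_t1 : (cool_k t <= t.+1)%N by rewrite /cool_k addn1 ltnS leq_div.
have k_le_n : (cool_k t <= n)%N by lia.
have agree_lt := card_ycode_agree_lt l_le_ck (can_inj betaK) alpha_inj k_le_n.
rewrite leqNgt; apply/negP.
move=> /card_gt1P[_ [_ [/imsetP[i + ->] /imsetP[j + ->] wij]]].
rewrite !inE => /andP[iH s3i] /andP[jH s3j].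
have wji : w j != w i by rewrite eq_sym.
have s1_two m : m \in H -> s1 n t l c F alpha beta H w adv1 m ->
    w m = w i \/ w m = w j.
  move=> mH s1m; apply: (cool_eta2_message eta1 iH jH mH _ _ s1m wij).
  - exact: s2_s1 (s3_s2 s3i).
  - exact: s2_s1 (s3_s2 s3j).
have s1_two' m : m \in H -> s1 n t l c F alpha beta H w adv1 m ->
    w m = w j \/ w m = w i.
  by move=> mH /(s1_two m mH) [] ->; [right | left].
have := s3_honest_bound s1_two iH s3i erefl.
have := s3_honest_bound s1_two' jH s3j erefl.
have := agree_lt _ _ wij; have := agree_lt _ _ wji.
have := card_fibers2_le H w wij; have := cardsC H; rewrite card_ord.
lia.
Qed.
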